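(* Let $a_1,a_2>0$, $e_1,e_2\in[0,1)$ and $E_1,E_2\in\mathbb{R}$. Put $x_i=a_i(\cos E_i-e_i)$, $y_i=a_i\sqrt{1-e_i^2}\,\sin E_i$ for $i=1,2$, and let $R_{AB}^2=(x_1-x_2)^2+(y_1-y_2)^2$ be the squared Euclidean distance. Suppose the ''condition for intersatellite communications'' holds: $$4a_1a_2\sqrt{(1-e_1^2)(1-e_2^2)}\,\sin E_1\sin E_2=a_1^2+a_2^2+(a_2e_2-a_1e_1)^2-\tfrac12\left(e_1^2a_1^2+e_2^2a_2^2\right).$$ Define the squared geodesic distance $$\widetilde R_{AB}^2=\tfrac12(a_1^2+a_2^2)+\tfrac12(a_2e_2-a_1e_1)^2+\tfrac14(a_1^2e_1^2+a_2^2e_2^2)-\left(2e_1a_1^2\cos E_1+2e_2a_2^2\cos E_2\right)-\left(e_1^2a_1^2\sin^2E_1+e_2^2a_2^2\sin^2E_2\right)-2a_1a_2\cos E_1\cos E_2+2a_1a_2\left(e_2\cos E_1+e_1\cos E_2\right).$$ Then $\widetilde R_{AB}^2\ge R_{AB}^2$.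
   Context: The points $(x_i,y_i)$ are positions of two satellites on coplanar Kepler ellipses with semi-major axes $a_i$, eccentricities $e_i$ and eccentric anomaly angles $E_i$, parametrized as stated. The quantity $\widetilde R_{AB}^2$ is what the paper calls the (square of the) geodesic distance; it is given explicitly by the displayed formula. *)

From Stdlib Require Import Reals.
Open Scope R_scope.

(* Position of a satellite on a Kepler ellipse with semi-major axis a,
   eccentricity e, eccentric anomaly E. *)
Definition kx (a e E : R) : R := a * (cos E - e).
Definition ky (a e E : R) : R := a * sqrt (1 - e ^ 2) * sin E.

Definition RAB2 (a1 e1 E1 a2 e2 E2 : R) : R :=
  (kx a1 e1 E1 - kx a2 e2 E2) ^ 2 + (ky a1 e1 E1 - ky a2 e2 E2) ^ 2.

Definition comm_condition (a1 e1 E1 a2 e2 E2 : R) : Prop :=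
  4 * a1 * a2 * sqrt ((1 - e1 ^ 2) * (1 - e2 ^ 2)) * sin E1 * sin E2 =
  a1 ^ 2 + a2 ^ 2 + (a2 * e2 - a1 * e1) ^ 2
  - / 2 * (e1 ^ 2 * a1 ^ 2 + e2 ^ 2 * a2 ^ 2).

Definition RAB2_geo (a1 e1 E1 a2 e2 E2 : R) : R :=
  / 2 * (a1 ^ 2 + a2 ^ 2) + / 2 * (a2 * e2 - a1 * e1) ^ 2
  + / 4 * (a1 ^ 2 * e1 ^ 2 + a2 ^ 2 * e2 ^ 2)
  - (2 * e1 * a1 ^ 2 * cos E1 + 2 * e2 * a2 ^ 2 * cos E2)
  - (e1 ^ 2 * a1 ^ 2 * (sin E1) ^ 2 + e2 ^ 2 * a2 ^ 2 * (sin E2) ^ 2)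
  - 2 * a1 * a2 * cos E1 * cos E2
  + 2 * a1 * a2 * (e2 * cos E1 + e1 * cos E2).

(* The inequality holds with equality.  Expanding the squared distance as
   |P1|^2 + |P2|^2 - 2 <P1, P2>, each |Pi|^2 is the classical focal radius
   (a_i (1 - e_i cos E_i))^2, and the only term of <P1, P2> that involves the
   square roots is a1 a2 sqrt((1 - e1^2)(1 - e2^2)) sin E1 sin E2, which the
   communication condition expresses polynomially in the a_i and e_i.  What
   remains is a polynomial identity modulo sin^2 + cos^2 = 1. *)

From Stdlib Require Import Reals Lra.
Open Scope R_scope.

Lemma sin_sqr_add_cos_sqr (x : R) : sin x ^ 2 + cos x ^ 2 = 1.
Proof. rewrite <- (sin2_cos2 x); unfold Rsqr; ring. Qed.

Lemma kx_sqr_add_ky_sqr (a e E : R) :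
  e ^ 2 <= 1 -> kx a e E ^ 2 + ky a e E ^ 2 = (a * (1 - e * cos E)) ^ 2.
Proof.
  intros he; unfold kx, ky.
  assert (hsqrt : sqrt (1 - e ^ 2) ^ 2 = 1 - e ^ 2) by (apply pow2_sqrt; lra).
  assert (hsin : sin E ^ 2 = 1 - cos E ^ 2) by (rewrite <- (sin_sqr_add_cos_sqr E); ring).
  replace ((a * sqrt (1 - e ^ 2) * sin E) ^ 2)
    with (a ^ 2 * sqrt (1 - e ^ 2) ^ 2 * sin E ^ 2) by ring.
  rewrite hsqrt, hsin; ring.
Qed.

Lemma ky_mul_ky (a1 e1 E1 a2 e2 E2 : R) :
  e1 ^ 2 <= 1 -> e2 ^ 2 <= 1 ->
  ky a1 e1 E1 * ky a2 e2 E2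
  = a1 * a2 * sqrt ((1 - e1 ^ 2) * (1 - e2 ^ 2)) * sin E1 * sin E2.
Proof.
  intros he1 he2; unfold ky.
  rewrite sqrt_mult by lra; ring.
Qed.

Lemma RAB2_geo_eq_RAB2 (a1 e1 E1 a2 e2 E2 : R) :
  e1 ^ 2 <= 1 -> e2 ^ 2 <= 1 ->
  comm_condition a1 e1 E1 a2 e2 E2 ->
  RAB2_geo a1 e1 E1 a2 e2 E2 = RAB2 a1 e1 E1 a2 e2 E2.
Proof.
  intros he1 he2 hcomm.
  assert (hpolar : RAB2 a1 e1 E1 a2 e2 E2
    = (kx a1 e1 E1 ^ 2 + ky a1 e1 E1 ^ 2) + (kx a2 e2 E2 ^ 2 + ky a2 e2 E2 ^ 2)
      - 2 * (kx a1 e1 E1 * kx a2 e2 E2 + ky a1 e1 E1 * ky a2 e2 E2))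
    by (unfold RAB2; ring).
  rewrite hpolar, !kx_sqr_add_ky_sqr, ky_mul_ky by assumption.
  unfold comm_condition in hcomm; unfold RAB2_geo, kx.
  assert (hcos1 : cos E1 ^ 2 = 1 - sin E1 ^ 2)
    by (rewrite <- (sin_sqr_add_cos_sqr E1); ring).
  assert (hcos2 : cos E2 ^ 2 = 1 - sin E2 ^ 2)
    by (rewrite <- (sin_sqr_add_cos_sqr E2); ring).
  replace ((a1 * (1 - e1 * cos E1)) ^ 2)
    with (a1 ^ 2 * (1 - 2 * e1 * cos E1) + a1 ^ 2 * e1 ^ 2 * cos E1 ^ 2) by ring.
  replace ((a2 * (1 - e2 * cos E2)) ^ 2)
    with (a2 ^ 2 * (1 - 2 * e2 * cos E2) + a2 ^ 2 * e2 ^ 2 * cos E2 ^ 2) by ring.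
  rewrite hcos1, hcos2.
  lra.
Qed.

Theorem mainTheorem1 (a1 a2 e1 e2 E1 E2 : R) :
  0 < a1 -> 0 < a2 ->
  0 <= e1 < 1 -> 0 <= e2 < 1 ->
  comm_condition a1 e1 E1 a2 e2 E2 ->
  RAB2_geo a1 e1 E1 a2 e2 E2 >= RAB2 a1 e1 E1 a2 e2 E2.
Proof.
  intros _ _ [he1 he1'] [he2 he2'] hcomm.
  apply Req_ge, RAB2_geo_eq_RAB2; [nra | nra | exact hcomm].
Qed.
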